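(* Assume the Standing setup and the Time series setup, suppose that $R(z)$ is analytic on $\mathcal V_\epsilon\cup\mathcal W_\theta$ for some $\epsilon>0$ and $\theta>0$, that $R$ has a simple pole at $z=1$ (i.e. $T_{-1}\ne0$ and $T_{-k}=0$ for $k\ge2$), and that $x(-1)=c\in T_{-1}(Y)$. Then $T_{-1}(Y)=P(X)$, and for every integer $t\ge0$ $$x(t)=T_{-1}\Big[C_1c-\sum_{s=0}^tg(t-s)\Big]+\sum_{s=0}^tV_s\,g(t-s).$$ Consequently, for every bounded linear functional $f\in X^*$ with $f(u)=0$ for all $u\in T_{-1}(Y)$, one has $f(x(t))=\sum_{s=0}^tf\big(V_sg(t-s)\big)$ for all $t\ge0$.
   Context: Standing setup. Let $X,Y$ be complex Banach spaces, let $\mathcal B(X,Y)$ denote the bounded linear operators from $X$ to $Y$ ($\mathcal B(X)=\mathcal B(X,X)$), and let $I_X$ be the identity on $X$. Let $A_0,A_1\in\mathcal B(X,Y)$, let $A(z)=A_0+A_1z$ ($z\in\mathbb C$), and set $C_0=A_0+A_1$, $C_1=A_1$, so that $A(z)=C_0+C_1(z-1)$. Let $R(z)=A(z)^{-1}\in\mathcal B(Y,X)$ where this inverse exists. For $\epsilon>0$ let $\mathcal V_\epsilon=\{z\in\mathbb C:|z|<1+\epsilon,\ z\ne1\}$, and for $\theta>0$ let $\mathcal W_\theta=\{z\in\mathbb C:0<|z-1|<1+\theta\}$. If $R$ is analytic on $\mathcal V_\epsilon$ then it has a Laurent expansion $R(z)=\sum_{j\in\mathbb Z}T_j(z-1)^j$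 on $0<|z-1|<\epsilon$ with $T_j\in\mathcal B(Y,X)$, and (known facts) $T_{-k}=(-1)^{k-1}(T_{-1}C_0)^{k-1}T_{-1}$ for $k\ge1$, $T_\ell=(-1)^\ell(T_0C_1)^\ell T_0$ for $\ell\ge0$, $\|(T_{-1}C_0)^k\|^{1/k}\to0$, $T_{-1}C_1+T_0C_0=I_X$, $C_1T_{-1}+C_0T_0=I_Y$, $T_{-1}C_iT_0=0$ and $T_0C_iT_{-1}=0$ for $i=0,1$; moreover $P=T_{-1}C_1$ and $P^c=I_X-P=T_0C_0$ are complementary projections on $X$ and $Q=C_1T_{-1}$, $Q^c=I_Y-Q=C_0T_0$ are complementary projections on $Y$. The singular part $R_{\rm sin}(z)=\sum_{k\ge1}T_{-k}(z-1)^{-k}$ converges for all $z\ne1$ and the regular part is $R_{\rm reg}(z)=\sum_{\ell\ge0}T_\ell(z-1)^\ell$. Define, for integers $s\ge0$, $U_s=-(I_X-T_{-1}C_0)^{-s-1}T_{-1}$ (these are the Maclaurin coefficients of $R_{\rm sin}$) and, whenever $I_X-T_0C_1$ is invertible, $V_s=(-1)^s(I_X-T_0C_1)^{-s-1}(T_0C_1)^sT_0$. Time series setup. Let $(\Omega,\Sigma,\mu)$ be a probability space and $\{n(t)\}_{t\in\mathbb Z}$ a sequence of i.i.d. $X$-valued (Bochner measurable) random variables with $\mathbb E\|n(t)\|^2<\infty$ and $\mathbb E[n(t)]=0$. Let $F_0,F_1\in\mathcal B(X,Y)$ and $g(t)=F_0n(t)+F_1n(t-1)$ for $t\in\mathbb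 Z$. The $X$-valued random sequence $\{x(t)\}_{t\ge-1}$ satisfies $x(-1)=c$ and $A_0x(t)+A_1x(t-1)=g(t)$ for every integer $t\ge0$. Let $g_+(t)=g(t)$ for $t\ge0$ and $g_+(t)=0$ for $t<0$. For integers $t\ge0$, $k\ge1$, $\ell\ge0$ write $\nabla^{-k}g_+(t)=\sum_{s=0}^t\binom{s+k-1}{s}g(t-s)$, $\nabla^\ell g_+(t)=\sum_{s=0}^{\min\{\ell,t\}}\binom{\ell}{s}(-1)^sg(t-s)$ and $\nabla^\ell g(t)=\sum_{s=0}^{\ell}\binom{\ell}{s}(-1)^sg(t-s)$. *)

From Stdlib Require Import Reals ZArith.
From Coquelicot Require Import Coquelicot.
Open Scope R_scope.

Section Ops.
Context {X Y : NormedModule C_AbsRing}.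

(* Convergence of a sequence of (bounded) operators Y -> X in operator norm:
   sup_{||y||<=1} ||S N y - L y|| -> 0, written without the sup. *)
Definition op_conv (S : nat -> Y -> X) (L : Y -> X) : Prop :=
  forall e : R, 0 < e -> exists N0 : nat, forall N : nat, (N0 <= N)%nat ->
    forall y : Y, norm (minus (S N y) (L y)) <= e * norm y.

Definition is_bounded_inverse (A : Y -> X) (B : X -> Y) : Prop :=
  is_linear B /\ (forall x : X, A (B x) = x) /\ (forall y : Y, B (A y) = y).

Definition analytic_on (Rf : C -> Y -> X) (D : C -> Prop) : Prop :=
  forall z0 : C, D z0 ->
    exists r : R, 0 < r /\ (forall z : C, Cmod (z - z0) < r -> D z) /\
      exists B : nat -> Y -> X, (forall j, is_linear (B j)) /\
        forall z : C, Cmod (z - z0) < r ->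
          op_conv (fun N y => sum_n (fun j => scal (pow_n (z - z0)%C j) (B j y)) N) (Rf z).

Definition laurent_expansion (Rf : C -> Y -> X) (T : Z -> Y -> X) (a : C) (e : R) : Prop :=
  (forall j, is_linear (T j)) /\
  forall z : C, 0 < Cmod (z - a) < e ->
    exists Ssin Sreg : Y -> X,
      op_conv (fun N y => sum_n (fun k => scal (pow_n (Cinv (z - a)) (S k))
                                            (T (- Z.of_nat (S k))%Z y)) N) Ssin /\
      op_conv (fun N y => sum_n (fun l => scal (pow_n (z - a)%C l) (T (Z.of_nat l) y)) N) Sreg /\
      forall y : Y, Rf z y = plus (Ssin y) (Sreg y).

(* V_s = (-1)^s J^{s+1} (T0 C1)^s T0, where J = (I_X - T0 C1)^{-1}. *)
Definition Vcoef (J : Y -> Y) (T0 : X -> Y) (C1 : Y -> X) (s : nat) : X -> Y :=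
  fun u => scal (pow_n (RtoC (-1)) s)
                (Nat.iter (S s) J (Nat.iter s (fun v => T0 (C1 v)) (T0 u))).
End Ops.

Definition VW_domain (eps theta : R) (z : C) : Prop :=
  (Cmod z < 1 + eps /\ z <> RtoC 1) \/ (0 < Cmod (z - RtoC 1) < 1 + theta).

Definition gseq {X Y : NormedModule C_AbsRing} {Omega : Type}
  (F0 F1 : X -> Y) (n : Z -> Omega -> X) (t : Z) (w : Omega) : Y :=
  plus (F0 (n t w)) (F1 (n (t - 1)%Z w)).

(* Write C0 = A0 + A1, C1 = A1, so that A(1 + t) = C0 + t C1.  On the real ray
   z = 1 + t (t > 0 small) the Laurent expansion becomes
   R(1 + t) = T_{-1} / t + sum_l T_l t^l.  Substituting it into R(z) A(z) = I
   and A(z) R(z) = I and identifying the coefficients of 1/t, 1 and t (a power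
   series converging at some r0 > 0 is, near 0, within O(t^2) of its first two
   terms) yields the identities
     T_{-1} C0 = 0,  T_{-1} C1 + T_0 C0 = I,
     C0 T_{-1} = 0,  C1 T_{-1} + C0 T_0 = I,  C0 T_1 + C1 T_0 = 0.
   As 0 lies in the domain, A0^{-1} = R(0) exists, and J = T_{-1} C1 + A0^{-1} C0
   is a bounded inverse of I - T_0 C1 commuting with T_0 C1.  The rest is
   algebra: applying T_{-1} to the recursion determines P x(t), P = T_{-1} C1,
   and applying T_0 gives (I - T_0 C1) P^c x(t) = T_0 g(t) - T_0 C1 P^c x(t-1),
   whose solution is the convolution  sum_s V_s g(t - s). *)

From Stdlib Require Import Reals ZArith Lra Lia ssreflect.
From Coquelicot Require Import Coquelicot.
Open Scope R_scope.

Local Notation "t *: v" := (scal (RtoC t) v) (at level 40, left associativity).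
Local Notation "s --> l" := (filterlim s eventually (locally l)) (at level 70).

Section GroupIdentities.
Context {G : AbelianGroup}.

Lemma minus_plus_l (x y : G) : minus (plus x y) x = y.
Proof. by rewrite /minus plus_comm plus_assoc plus_opp_l plus_zero_l. Qed.

Lemma plus_minus_l (x y : G) : plus (minus x y) y = x.
Proof. by rewrite /minus -plus_assoc plus_opp_l plus_zero_r. Qed.

Lemma minus_plus_plus (x y z : G) : minus (plus x y) (plus x z) = minus y z.
Proof.
  by rewrite /minus opp_plus plus_assoc (plus_comm x y) -(plus_assoc y) plus_opp_r plus_zero_r.
Qed.

Lemma minus_plus_r (x y : G) : minus (plus x y) y = x.
Proof. by rewrite plus_comm minus_plus_l. Qed.

Lemma minus_plus_swap (x y z : G) : minus (plus x y) z = plus (minus x z) y.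
Proof. by rewrite /minus -!plus_assoc (plus_comm y). Qed.

Lemma minus_eq_zero_eq (x y : G) : minus x y = zero -> x = y.
Proof. move=> H. by rewrite -(plus_minus_l x y) H plus_zero_l. Qed.

Lemma plus_rearrange_zero (x y z e f : G) :
  plus (plus (plus x y) e) (plus z f) = x -> plus y z = opp (plus e f).
Proof.
  move=> H. apply: (plus_reg_r (plus e f)). rewrite plus_opp_l. apply: (plus_reg_l x).
  rewrite plus_zero_r -{2}H !plus_assoc. congr plus.
  by rewrite -!plus_assoc (plus_comm z e).
Qed.

Lemma plus_plus_swap (x y z w : G) : plus (plus x y) (plus z w) = plus (plus x z) (plus y w).
Proof. by rewrite -!plus_assoc (plus_assoc y) (plus_comm y) -plus_assoc. Qed.

Lemma plus_left_zero (x y : G) : plus x y = y -> x = zero.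
Proof. move=> H. apply: (plus_reg_r y). by rewrite H plus_zero_l. Qed.

Lemma plus_eq_zero_opp (x y : G) : plus x y = zero -> x = opp y.
Proof. move=> H. apply: (plus_reg_r y). by rewrite H plus_opp_l. Qed.

Lemma plus_solve_r (x y w : G) : plus x y = w -> y = minus w x.
Proof. move=> <-. by rewrite plus_comm minus_plus_r. Qed.

Lemma minus_plus_minus (x w y : G) : minus (plus x w) (minus w y) = plus x y.
Proof. by rewrite /minus opp_plus opp_opp -plus_assoc (plus_assoc w) plus_opp_r plus_zero_l. Qed.

Lemma plus_solve_l (x y w : G) : plus x y = w -> x = minus w y.
Proof. move=> <-. by rewrite minus_plus_r. Qed.

Lemma minus_solve (x y w : G) : minus x y = w -> y = minus x w.
Proof. move=> <-. by rewrite /minus opp_plus opp_opp plus_assoc plus_opp_r plus_zero_l. Qed.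

Lemma minus_minus (x y z : G) : minus (minus x y) z = minus x (plus z y).
Proof. by rewrite /minus opp_plus -plus_assoc (plus_comm (opp z)). Qed.

Lemma plus_interchange (x y z w : G) :
  plus (plus x y) (plus z w) = plus x (plus z (plus y w)).
Proof. by rewrite -!plus_assoc (plus_assoc y) (plus_comm y) -plus_assoc. Qed.

End GroupIdentities.

Section RealScalars.
Context {V : NormedModule C_AbsRing}.

Lemma pow_RtoC (t : R) (l : nat) : pow_n (K := C_AbsRing) (RtoC t) l = RtoC (t ^ l).
Proof.
  elim: l => [|l IH] //=. rewrite IH.
  change (mult (RtoC t) (RtoC (t ^ l)) = RtoC (t * t ^ l)). by rewrite RtoC_mult.
Qed.

Lemma scal_RR (x y : R) (v : V) : x *: (y *: v) = (x * y) *: v.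
Proof. rewrite scal_assoc. congr scal. change (RtoC x * RtoC y = RtoC (x * y))%C. by rewrite RtoC_mult. Qed.

Lemma scal_R1 (v : V) : 1 *: v = v.
Proof. exact: (scal_one (K := C_AbsRing)). Qed.

Lemma scal_Rinv_l (t : R) (v : V) : t <> 0 -> / t *: (t *: v) = v.
Proof. move=> ht. by rewrite scal_RR Rinv_l // scal_R1. Qed.

Lemma scal_Rinv_r (t : R) (v : V) : t <> 0 -> t *: (/ t *: v) = v.
Proof. move=> ht. by rewrite scal_RR Rinv_r // scal_R1. Qed.

Lemma norm_scal_R (t : R) (v : V) : 0 <= t -> norm (t *: v) <= t * norm v.
Proof.
  move=> ht. have Habs : abs (K := C_AbsRing) (RtoC t) = t by rewrite /abs /= Cmod_R Rabs_right; lra.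
  by rewrite -{2}Habs; apply: norm_scal.
Qed.

Lemma norm_minus_le (x y : V) : norm (minus x y) <= norm x + norm y.
Proof. rewrite -(norm_opp y). exact: norm_triangle. Qed.

Lemma norm_plus_bound (x y : V) (bx b_y : R) :
  norm x <= bx -> norm y <= b_y -> norm (plus x y) <= bx + b_y.
Proof. move=> hx hy. apply: Rle_trans (norm_triangle x y) _. lra. Qed.

Lemma norm_minus_bound (x y : V) (bx b_y : R) :
  norm x <= bx -> norm y <= b_y -> norm (minus x y) <= bx + b_y.
Proof. move=> hx hy. apply: Rle_trans (norm_minus_le x y) _. lra. Qed.

Lemma norm_scal_bound (t : R) (v : V) (b : R) : 0 <= t -> norm v <= b -> norm (t *: v) <= t * b.
Proof. move=> ht hv. apply: Rle_trans (norm_scal_R t v ht) _. exact: Rmult_le_compat_l. Qed.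

End RealScalars.

Lemma is_linear_plus_fun {U V : NormedModule C_AbsRing} (f g : U -> V) :
  is_linear f -> is_linear g -> is_linear (fun u => plus (f u) (g u)).
Proof. move=> Hf Hg. exact: is_linear_comp (is_linear_prod _ _ Hf Hg) is_linear_plus. Qed.

Lemma linear_sum_n {V W : NormedModule C_AbsRing} (f : V -> W) (a : nat -> V) (N : nat) :
  is_linear f -> f (sum_n a N) = sum_n (fun k => f (a k)) N.
Proof.
  move=> Hf. elim: N => [|N IH]; first by rewrite !sum_O.
  by rewrite !sum_Sn (linear_plus f Hf) IH.
Qed.

Section Limits.
Context {V : NormedModule C_AbsRing}.

Lemma lim_normP (s : nat -> V) (l : V) :
  s --> l <-> forall e, 0 < e -> exists N0, forall N, (N0 <= N)%nat -> norm (minus (s N) l) <= e.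
Proof.
  rewrite filterlim_locally. split.
  - move=> H e he.
    have hf := @norm_factor_gt_0 C_AbsRing V.
    have [N0 HN0] := H (mkposreal (e / norm_factor) (Rdiv_lt_0_compat _ _ he hf)).
    have Ediv : forall x : R, 0 < x -> x * (e / x) = e by move=> x hx; field; lra.
    exists N0 => N /HN0 /norm_compat2 /=. rewrite Ediv //. lra.
  - move=> H eps. have [N0 HN0] := H (eps / 2) ltac:(move: (cond_pos eps); lra).
    exists N0 => N /HN0 hN. apply: norm_compat1. move: (cond_pos eps). lra.
Qed.

Lemma lim_unique (s : nat -> V) (l1 l2 : V) : s --> l1 -> s --> l2 -> l1 = l2.
Proof. move=> H1 H2. exact: (@filterlim_locally_unique nat C_AbsRing V eventually _ s l1 l2 H1 H2). Qed.

Lemma lim_linear {W : NormedModule C_AbsRing} (f : V -> W) (s : nat -> V) (l : V) :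
  is_linear f -> s --> l -> (fun N => f (s N)) --> f l.
Proof. move=> Hf Hs. exact: (filterlim_comp _ _ _ s f _ _ _ Hs (linear_cont f l Hf)). Qed.

Lemma lim_plus (s s' : nat -> V) (l l' : V) :
  s --> l -> s' --> l' -> (fun N => plus (s N) (s' N)) --> plus l l'.
Proof.
  move=> Hs Hs'. apply: (filterlim_comp_2 (G := locally l) (H := locally l') s s' plus) => //.
  exact: filterlim_plus.
Qed.

Lemma lim_scal (k : R) (s : nat -> V) (l : V) :
  s --> l -> (fun N => k *: s N) --> k *: l.
Proof. apply: lim_linear. apply: is_linear_scal_r => x y. exact: Cmult_comm. Qed.

Lemma lim_norm_le (s : nat -> V) (l c : V) (B : R) (N0 : nat) :
  s --> l -> (forall N, (N0 <= N)%nat -> norm (minus (s N) c) <= B) -> norm (minus l c) <= B.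
Proof.
  move=> /lim_normP Hs HB.
  apply: Rnot_lt_le => hlt.
  have [N1 HN1] := Hs ((norm (minus l c) - B) / 2) ltac:(lra).
  have h1 := HN1 (N0 + N1)%nat ltac:(lia). have h2 := HB (N0 + N1)%nat ltac:(lia).
  have := norm_triangle (minus l (s (N0 + N1)%nat)) (minus (s (N0 + N1)%nat) c).
  rewrite -minus_trans -(opp_minus (s _) l) norm_opp. lra.
Qed.

Lemma lim_bounded (s : nat -> V) (l : V) : s --> l -> exists B, forall N, norm (s N) <= B.
Proof.
  move=> /lim_normP Hs. have [N0 HN0] := Hs 1 Rlt_0_1.
  have [B0 HB0] : exists B0, forall N, (N <= N0)%nat -> norm (s N) <= B0.
  { elim: N0 {HN0} => [|N0 [B0 HB0]].
    - exists (norm (s O)) => N hN. have -> : N = O by lia. lra.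
    - exists (Rmax B0 (norm (s (S N0)))) => N hN.
      case: (Nat.eq_dec N (S N0)) => [->|hne]; first exact: Rmax_r.
      apply: Rle_trans (Rmax_l _ _). apply: HB0. lia. }
  exists (Rmax B0 (norm l + 1)) => N.
  case: (le_lt_dec N N0) => hN; first exact: Rle_trans (HB0 N hN) (Rmax_l _ _).
  apply: Rle_trans (Rmax_r _ _).
  have := norm_triangle (minus (s N) l) l. rewrite plus_minus_l.
  have := HN0 N ltac:(lia). lra.
Qed.
End Limits.

Lemma op_conv_lim {U V : NormedModule C_AbsRing} (S : nat -> U -> V) (L : U -> V) :
  op_conv S L -> forall y, (fun N => S N y) --> L y.
Proof.
  move=> H y. apply/lim_normP => e he. have hy := norm_ge_0 y.
  have [N0 HN0] := H (e / (norm y + 1)) ltac:(apply: Rdiv_lt_0_compat; lra).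
  exists N0 => N /HN0 h. apply: Rle_trans (h y) _.
  have -> : e / (norm y + 1) * norm y = e * (norm y / (norm y + 1)) by field; lra.
  have : norm y / (norm y + 1) <= 1 by apply/Rle_div_l; lra.
  have : 0 <= norm y / (norm y + 1) by apply: Rdiv_le_0_compat; lra.
  nra.
Qed.

Definition psum {V : NormedModule C_AbsRing} (a : nat -> V) (t : R) (N : nat) : V :=
  sum_n (fun l => scal (pow_n (RtoC t) l) (a l)) N.

Lemma psum_O {V : NormedModule C_AbsRing} (a : nat -> V) (t : R) : psum a t O = a O.
Proof. by rewrite /psum sum_O pow_RtoC /= scal_R1. Qed.

Lemma psum_S {V : NormedModule C_AbsRing} (a : nat -> V) (t : R) (N : nat) :
  psum a t (S N) = plus (psum a t N) (t ^ S N *: a (S N)).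
Proof. by rewrite /psum sum_Sn pow_RtoC. Qed.

Lemma psum_linear {V W : NormedModule C_AbsRing} (f : V -> W) (a : nat -> V) (t : R) (N : nat) :
  is_linear f -> f (psum a t N) = psum (fun l => f (a l)) t N.
Proof.
  move=> Hf. elim: N => [|N IH]; first by rewrite /psum !sum_O (linear_scal f Hf).
  by rewrite !psum_S (linear_plus f Hf) IH (linear_scal f Hf).
Qed.

Lemma psum_combination {V : NormedModule C_AbsRing} (a b : nat -> V) (t k : R) (N : nat) :
  psum (fun l => plus (a l) (k *: b l)) t N = plus (psum a t N) (k *: psum b t N).
Proof.
  elim: N => [|N IH]; first by rewrite !psum_O.
  rewrite !psum_S IH (scal_distr_l (RtoC (t ^ S N))) (scal_distr_l (RtoC k) (psum b t N)).
  rewrite !scal_RR (Rmult_comm k). exact: plus_plus_swap.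
Qed.

Section PowerSeries.
Context {V : NormedModule C_AbsRing}.

Lemma psum_terms_bounded (a : nat -> V) (r0 : R) (L : V) :
  psum a r0 --> L -> exists M, 0 <= M /\ forall l, norm (r0 ^ l *: a l) <= M.
Proof.
  move=> /lim_bounded [B HB]. have hB : 0 <= B by apply: Rle_trans (HB O); apply: norm_ge_0.
  exists (2 * B). split; first lra.
  case=> [|l].
  - rewrite /= scal_R1 -(psum_O a r0). move: (HB O). lra.
  - rewrite -(minus_plus_l (psum a r0 l) (r0 ^ S l *: a (S l))) -psum_S.
    have := norm_minus_le (psum a r0 (S l)) (psum a r0 l). move: (HB l) (HB (S l)). lra.
Qed.

Lemma geometric_tail (q : R) (N : nat) :
  0 <= q <= 1/2 -> sum_f_R0 (fun l => q ^ (l + 2)) N <= 2 * q ^ 2.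
Proof.
  move=> hq.
  suff : sum_f_R0 (fun l => q ^ (l + 2)) N <= 2 * q ^ 2 - 2 * q ^ (N + 3).
  { have := pow_le q (N + 3) ltac:(lra). lra. }
  elim: N => [|N IH].
  - have : 0 <= q * q * (1 - 2 * q) by apply: Rmult_le_pos; [apply: Rmult_le_pos|]; lra.
    rewrite /=. lra.
  - have E2 : (S N + 2 = S (N + 2))%nat by lia.
    have E3 : (S N + 3 = S (S (N + 2)))%nat by lia.
    have E3' : (N + 3 = S (N + 2))%nat by lia.
    rewrite tech5 E2 E3 /=. rewrite E3' /= in IH.
    have hp := pow_le q (N + 2) ltac:(lra).
    have : 0 <= q * q ^ (N + 2) * (1 - 2 * q) by apply: Rmult_le_pos; [apply: Rmult_le_pos|]; lra.
    lra.
Qed.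

Lemma psum_remainder (a : nat -> V) (t M q : R) (N : nat) :
  0 <= M -> (forall l, norm (t ^ l *: a l) <= M * q ^ l) ->
  norm (minus (psum a t (S (S N))) (plus (a O) (t *: a 1%nat)))
    <= M * sum_f_R0 (fun l => q ^ (l + 2)) N.
Proof.
  move=> hM Hterm. elim: N => [|N IH].
  - rewrite psum_S psum_S psum_O pow_1 minus_plus_l. exact: Hterm 2%nat.
  - rewrite psum_S minus_plus_swap. apply: Rle_trans (norm_triangle _ _) _.
    have -> : S (S (S N)) = (S N + 2)%nat by lia.
    rewrite tech5 Rmult_plus_distr_l. move: (Hterm (S N + 2)%nat) IH. lra.
Qed.

Lemma psum_second_order (a : nat -> V) (r0 : R) (L : V) :
  0 < r0 -> psum a r0 --> L ->
  exists K, 0 <= K /\ forall t Sv, 0 < t <= r0 / 2 -> psum a t --> Sv ->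
    norm (minus Sv (plus (a O) (t *: a 1%nat))) <= K * t ^ 2.
Proof.
  move=> hr0 /psum_terms_bounded [M [hM HM]].
  exists (2 * M / r0 ^ 2). split; first by apply: Rdiv_le_0_compat; [lra | apply: pow_lt].
  move=> t Sv ht HSv. set q := t / r0.
  have hq : 0 <= q <= 1/2 by split; rewrite /q; [apply: Rdiv_le_0_compat | apply/Rle_div_l]; lra.
  have Hterm : forall l, norm (t ^ l *: a l) <= M * q ^ l.
  { move=> l. have -> : t = q * r0 by rewrite /q; field; lra.
    rewrite Rpow_mult_distr -scal_RR.
    have hql := pow_le q l (proj1 hq).
    apply: Rle_trans (norm_scal_R _ _ hql) _. rewrite Rmult_comm.
    exact: Rmult_le_compat_r hql (HM l). }
  apply: (lim_norm_le _ _ _ _ 2%nat HSv) => N hN.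
  have -> : N = S (S (N - 2)) by lia.
  apply: Rle_trans (psum_remainder _ _ _ _ _ hM Hterm) _.
  have -> : 2 * M / r0 ^ 2 * t ^ 2 = M * (2 * q ^ 2) by rewrite /q; field; lra.
  apply: Rmult_le_compat_l hM _. exact: geometric_tail.
Qed.

End PowerSeries.

Section Coefficients.
Context {V : NormedModule C_AbsRing}.

Lemma vanishing_of_small (v : V) (K r : R) :
  0 < r -> (forall t, 0 < t < r -> norm v <= K * t) -> v = zero.
Proof.
  move=> hr H. apply: norm_eq_zero. apply: Rle_antisym; last exact: norm_ge_0.
  have hK : 0 <= K by have := H (r / 2) ltac:(lra); have := norm_ge_0 v; nra.
  apply: Rnot_lt_le => hv.
  set t := Rmin (r / 2) (norm v / (2 * (K + 1))).
  have ht : 0 < t by apply: Rmin_glb_lt; [lra | apply: Rdiv_lt_0_compat; lra].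
  have htv : t * (2 * (K + 1)) <= norm v.
  { apply/Rle_div_r; [lra | exact: Rmin_r]. }
  have htr : t < r by apply: Rle_lt_trans (Rmin_l _ _) _; lra.
  have := H t (conj ht htr). lra.
Qed.

Lemma coefficient_vanishes (v : V) (k : nat) (K r : R) :
  0 < r ->
  (forall t, 0 < t < r -> exists w, norm w <= K * t ^ S k /\ t ^ k *: v = w) -> v = zero.
Proof.
  move=> hr H. apply: (vanishing_of_small v K r hr) => t ht.
  have [w [Hw Ev]] := H t ht. have htk := pow_lt t k ltac:(lra).
  rewrite -(scal_Rinv_l (t ^ k) v) ?Ev; last lra.
  have hinv : 0 <= / t ^ k by left; apply: Rinv_0_lt_compat.
  apply: Rle_trans (norm_scal_R _ _ hinv) _.
  have -> : K * t = / t ^ k * (K * t ^ S k) by rewrite /=; field; lra.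
  exact: Rmult_le_compat_l hinv Hw.
Qed.

Lemma second_order_bounds (S a0 a1 : V) (K t : R) :
  0 <= K -> 0 < t <= 1 -> norm (minus S (plus a0 (t *: a1))) <= K * t ^ 2 ->
  norm (minus S a0) <= (norm a1 + K) * t /\ norm S <= norm a0 + norm a1 + K.
Proof.
  move=> hK ht HS. have ht0 : 0 <= t by lra.
  have E : minus S a0 = plus (minus S (plus a0 (t *: a1))) (t *: a1).
  { by rewrite -minus_plus_swap (plus_comm S) (plus_comm a0) minus_plus_plus. }
  have hKt : K * t ^ 2 <= K * t by apply: Rmult_le_compat_l hK _; rewrite /=; nra.
  have H1 : norm (minus S a0) <= (norm a1 + K) * t.
  { rewrite E. apply: Rle_trans (norm_plus_bound _ _ _ _ HS (norm_scal_bound t a1 _ ht0 (Rle_refl _))) _.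
    lra. }
  split; first done.
  rewrite -{1}(plus_minus_l S a0). apply: Rle_trans (norm_plus_bound _ _ _ _ H1 (Rle_refl _)) _.
  have := Rmult_le_compat_l (norm a1 + K) t 1 ltac:(have := norm_ge_0 a1; lra) (proj2 ht). lra.
Qed.

Lemma psum_local_bounds (a : nat -> V) (r0 : R) (L : V) :
  0 < r0 -> psum a r0 --> L ->
  exists K, 0 <= K /\ forall t Sv, 0 < t <= Rmin (r0 / 2) 1 -> psum a t --> Sv ->
    norm (minus Sv (plus (a O) (t *: a 1%nat))) <= K * t ^ 2 /\
    norm (minus Sv (a O)) <= K * t /\ norm Sv <= K.
Proof.
  move=> hr0 HL. have [K [hK HK]] := psum_second_order a r0 L hr0 HL.
  have ha := norm_ge_0 (a O). have ha1 := norm_ge_0 (a 1%nat).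
  exists (K + norm (a O) + norm (a 1%nat)). split; first lra.
  move=> t Sv ht HSv. have := Rmin_l (r0 / 2) 1. have := Rmin_r (r0 / 2) 1. move=> h1 h2.
  have H2 := HK t Sv ltac:(split; lra) HSv.
  have [H1 H0] := second_order_bounds Sv (a O) (a 1%nat) K t hK ltac:(split; lra) H2.
  have := pow_le t 2 ltac:(lra). repeat split; nra.
Qed.

Definition local_expansion (p c d : V) (a b : nat -> V) (Ka Kb r1 : R) : Prop :=
  forall t, 0 < t < r1 -> t <= 1 /\ exists Sa Sb,
    plus (/ t *: p) (plus c (plus Sa (t *: Sb))) = d /\
    norm (minus Sa (plus (a O) (t *: a 1%nat))) <= Ka * t ^ 2 /\
    norm (minus Sa (a O)) <= Ka * t /\ norm Sa <= Ka /\
    norm (minus Sb (b O)) <= Kb * t /\ norm Sb <= Kb.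

Section LocalExpansion.
Variables (p c d : V) (a b : nat -> V) (Ka Kb r1 : R).
Hypotheses (hr1 : 0 < r1) (Hloc : local_expansion p c d a b Ka Kb r1).

Lemma local_expansion_pole : p = zero.
Proof.
  apply: (coefficient_vanishes p 0 (norm d + norm c + Ka + Kb) r1 hr1) => t ht.
  have [ht1 [Sa [Sb [E [_ [_ [BSa [_ BSb]]]]]]]] := Hloc t ht.
  have ht0 : 0 <= t by lra. have hKb : 0 <= Kb by have := norm_ge_0 Sb; lra.
  exists (t *: minus d (plus c (plus Sa (t *: Sb)))). split.
  - have Hu := norm_minus_bound _ _ _ _ (Rle_refl (norm d))
                 (norm_plus_bound _ _ _ _ (Rle_refl (norm c))
                    (norm_plus_bound _ _ _ _ BSa (norm_scal_bound t Sb _ ht0 BSb))).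
    apply: Rle_trans (norm_scal_bound t _ _ ht0 Hu) _.
    have := Rmult_le_compat_l Kb t 1 hKb ht1. rewrite pow_1. nra.
  - rewrite -E minus_plus_r scal_Rinv_r /=; last lra. exact: scal_R1.
Qed.

Lemma local_expansion_constant : p = zero -> plus c (a O) = d.
Proof.
  move=> Hp. symmetry. apply: minus_eq_zero_eq.
  apply: (coefficient_vanishes _ 0 (Ka + Kb) r1 hr1) => t ht.
  have [ht1 [Sa [Sb [E [_ [BSa [_ [_ BSb]]]]]]]] := Hloc t ht.
  have ht0 : 0 <= t by lra.
  exists (plus (minus Sa (a O)) (t *: Sb)). split.
  - apply: Rle_trans (norm_plus_bound _ _ _ _ BSa (norm_scal_bound t Sb _ ht0 BSb)) _.
    rewrite pow_1. lra.
  - rewrite Hp scal_zero_r plus_zero_l in E.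
    by rewrite -E minus_plus_plus minus_plus_swap /= scal_R1.
Qed.

Lemma local_expansion_linear : p = zero -> plus c (a O) = d -> plus (a 1%nat) (b O) = zero.
Proof.
  move=> Hp Hd. apply: (coefficient_vanishes _ 1 (Ka + Kb) r1 hr1) => t ht.
  have [ht1 [Sa [Sb [E [BSa [_ [_ [BSb _]]]]]]]] := Hloc t ht.
  have ht0 : 0 <= t by lra.
  exists (opp (plus (minus Sa (plus (a O) (t *: a 1%nat))) (t *: minus Sb (b O)))). split.
  - rewrite norm_opp.
    apply: Rle_trans (norm_plus_bound _ _ _ _ BSa (norm_scal_bound t _ _ ht0 BSb)) _.
    rewrite /=. lra.
  - rewrite pow_1 scal_distr_l. apply: (plus_rearrange_zero (a O)).
    rewrite (plus_comm (plus (a O) _)) plus_minus_l -scal_distr_l (plus_comm (b O)) plus_minus_l.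
    rewrite Hp scal_zero_r plus_zero_l -Hd in E. exact: plus_reg_l E.
Qed.

End LocalExpansion.

Lemma expansion_coefficients (p c d : V) (a b : nat -> V) (r : R) :
  0 < r ->
  (forall t, 0 < t < r -> exists Sa Sb, psum a t --> Sa /\ psum b t --> Sb /\
     plus (/ t *: p) (plus c (plus Sa (t *: Sb))) = d) ->
  p = zero /\ plus c (a O) = d /\ plus (a 1%nat) (b O) = zero.
Proof.
  move=> hr H.
  have [Sa0 [Sb0 [Ha0 [Hb0 _]]]] := H (r / 2) ltac:(lra).
  have [Ka [hKa Ta]] := psum_local_bounds a (r / 2) Sa0 ltac:(lra) Ha0.
  have [Kb [hKb Tb]] := psum_local_bounds b (r / 2) Sb0 ltac:(lra) Hb0.
  set r1 := Rmin (r / 2 / 2) 1.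
  have hr1 : 0 < r1 by apply: Rmin_glb_lt; lra.
  have Hloc : local_expansion p c d a b Ka Kb r1.
  { move=> t ht. have := Rmin_l (r / 2 / 2) 1. have := Rmin_r (r / 2 / 2) 1.
    rewrite -/r1 => h1 h2.
    have [Sa [Sb [HSa [HSb E]]]] := H t ltac:(lra).
    have [? [? ?]] := Ta t Sa ltac:(rewrite -/r1; lra) HSa.
    have [? [? ?]] := Tb t Sb ltac:(rewrite -/r1; lra) HSb.
    split; [lra | by exists Sa, Sb]. }
  have Hp := local_expansion_pole _ _ _ _ _ _ _ _ hr1 Hloc.
  have Hd := local_expansion_constant _ _ _ _ _ _ _ _ hr1 Hloc Hp.
  by have := local_expansion_linear _ _ _ _ _ _ _ _ hr1 Hloc Hp Hd.
Qed.
End Coefficients.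

Definition simple_pole_identities {X Y : NormedModule C_AbsRing}
    (A0 A1 : X -> Y) (Tm T0 T1 : Y -> X) : Prop :=
  (forall u, Tm (plus (A0 u) (A1 u)) = zero) /\
  (forall u, plus (Tm (A1 u)) (T0 (plus (A0 u) (A1 u))) = u) /\
  (forall y, plus (A0 (Tm y)) (A1 (Tm y)) = zero) /\
  (forall y, plus (A1 (Tm y)) (plus (A0 (T0 y)) (A1 (T0 y))) = y) /\
  (forall y, plus (plus (A0 (T1 y)) (A1 (T1 y))) (A1 (T0 y)) = zero).

Section LaurentIdentities.
Context {X Y : NormedModule C_AbsRing}.
Variables (A0 A1 : X -> Y) (eps theta : R) (Rf : C -> Y -> X) (T : Z -> Y -> X).
Hypotheses (HA0 : is_linear A0) (HA1 : is_linear A1) (Heps : 0 < eps) (Htheta : 0 < theta).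
Hypothesis HRinv : forall z : C, VW_domain eps theta z ->
  is_bounded_inverse (fun u : X => plus (A0 u) (scal z (A1 u))) (Rf z).
Hypothesis HT : laurent_expansion Rf T (RtoC 1) eps.
Hypothesis Hpole2 : forall k : nat, (2 <= k)%nat -> forall y : Y, T (- Z.of_nat k)%Z y = zero.

(* C0 = A0 + A1, the regular Laurent coefficients T_l y, and a radius r for the
   ray z = 1 + t inside both the Laurent annulus and W_theta. *)
Let C0 (u : X) : Y := plus (A0 u) (A1 u).
Let Treg (y : Y) (l : nat) : X := T (Z.of_nat l) y.
Let r := Rmin eps 1.

Lemma pencil_near_one (t : R) (u : X) :
  plus (A0 u) (scal (RtoC (1 + t)) (A1 u)) = plus (C0 u) (t *: A1 u).
Proof. by rewrite RtoC_plus scal_distr_r scal_R1 plus_assoc. Qed.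

Lemma r_pos : 0 < r.
Proof. apply: Rmin_glb_lt; lra. Qed.

Lemma resolvent_on_ray (t : R) : 0 < t < r ->
  exists Sreg : Y -> X, (forall y, psum (Treg y) t --> Sreg y) /\
    forall y, Rf (RtoC (1 + t)) y = plus (/ t *: T (-1)%Z y) (Sreg y).
Proof.
  move=> ht. have := Rmin_l eps 1. have := Rmin_r eps 1. rewrite -/r => h1 h2.
  have Ez : (RtoC (1 + t) - RtoC 1)%C = RtoC t by apply: injective_projections => /=; ring.
  have hz : 0 < Cmod (RtoC (1 + t) - RtoC 1) < eps by rewrite Ez Cmod_R Rabs_right; lra.
  have [Ssin [Sreg [Hsin [Hreg Hsplit]]]] := proj2 HT _ hz.
  exists Sreg. split=> y; first by have := op_conv_lim _ _ Hreg y; rewrite Ez.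
  rewrite Hsplit. congr plus.
  apply: (lim_unique _ _ _ (op_conv_lim _ _ Hsin y)).
  apply: (filterlim_ext (fun _ => / t *: T (-1)%Z y)); last exact: filterlim_const.
  have Einv : Cinv (RtoC (1 + t) - RtoC 1) = RtoC (/ t).
  { rewrite Ez. apply: injective_projections => /=; field; lra. }
  rewrite Einv. elim=> [|N IH]; first by rewrite sum_O /= mult_one_r.
  rewrite sum_Sn -IH (Hpole2 (S (S N))); last lia. by rewrite scal_zero_r plus_zero_r.
Qed.

Lemma ray_in_domain (t : R) : 0 < t < r -> VW_domain eps theta (RtoC (1 + t)).
Proof.
  move=> ht. have := Rmin_r eps 1. rewrite -/r => h2. right.
  have -> : (RtoC (1 + t) - RtoC 1)%C = RtoC t by apply: injective_projections => /=; ring.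
  rewrite Cmod_R Rabs_right; lra.
Qed.

Let C0_linear : is_linear C0 := is_linear_plus_fun A0 A1 HA0 HA1.

(* The regular part, as a limit of linear maps, is linear. *)
Lemma regular_part_combination (t k : R) (Sreg : Y -> X) (v w : Y) :
  (forall y, psum (Treg y) t --> Sreg y) -> Sreg (plus v (k *: w)) = plus (Sreg v) (k *: Sreg w).
Proof.
  move=> HS. apply: (lim_unique _ _ _ (HS _)).
  apply: (filterlim_ext (fun N => plus (psum (Treg v) t N) (k *: psum (Treg w) t N))).
  - move=> N. rewrite -psum_combination /psum. apply: sum_n_ext => l.
    by rewrite /Treg (linear_plus _ (proj1 HT _)) (linear_scal _ (proj1 HT _)).
  - apply: lim_plus (HS v) (lim_scal _ _ _ (HS w)).
Qed.

Lemma left_identities (u : X) :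
  T (-1)%Z (C0 u) = zero /\ plus (T (-1)%Z (A1 u)) (T 0%Z (C0 u)) = u.
Proof.
  have HTm := proj1 HT (-1)%Z.
  have [] := expansion_coefficients (T (-1)%Z (C0 u)) (T (-1)%Z (A1 u)) u
               (Treg (C0 u)) (Treg (A1 u)) r r_pos; last by move=> ? [].
  move=> t ht. have [Sreg [HS Hsplit]] := resolvent_on_ray t ht.
  exists (Sreg (C0 u)), (Sreg (A1 u)). do 2 (split; first exact: HS).
  have := proj2 (proj2 (HRinv _ (ray_in_domain t ht))) u.
  rewrite pencil_near_one Hsplit (regular_part_combination t t Sreg _ _ HS).
  rewrite (linear_plus _ HTm) (linear_scal _ HTm) scal_distr_l scal_Rinv_l; last lra.
  by rewrite -plus_assoc.
Qed.

Lemma right_identities (y : Y) :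
  C0 (T (-1)%Z y) = zero /\ plus (A1 (T (-1)%Z y)) (C0 (T 0%Z y)) = y /\
  plus (C0 (T 1%Z y)) (A1 (T 0%Z y)) = zero.
Proof.
  apply: (expansion_coefficients _ _ _ (fun l => C0 (Treg y l)) (fun l => A1 (Treg y l)) r r_pos).
  move=> t ht. have [Sreg [HS Hsplit]] := resolvent_on_ray t ht.
  exists (C0 (Sreg y)), (A1 (Sreg y)). split; [|split].
  - apply: (filterlim_ext (fun N => C0 (psum (Treg y) t N))); last exact: lim_linear C0_linear (HS y).
    move=> N. exact: psum_linear C0_linear.
  - apply: (filterlim_ext (fun N => A1 (psum (Treg y) t N))); last exact: lim_linear HA1 (HS y).
    move=> N. exact: psum_linear HA1.
  - have Hinv := proj1 (proj2 (HRinv _ (ray_in_domain t ht))) y.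
    rewrite pencil_near_one Hsplit (linear_plus _ C0_linear) (linear_plus _ HA1) in Hinv.
    rewrite (linear_scal _ C0_linear) (linear_scal _ HA1) (scal_distr_l (RtoC t)) in Hinv.
    rewrite scal_Rinv_r in Hinv; last lra.
    by rewrite plus_interchange in Hinv.
Qed.

Lemma laurent_pole_identities : simple_pole_identities A0 A1 (T (-1)%Z) (T 0%Z) (T 1%Z).
Proof.
  split; [|split; [|split; [|split]]] => [u|u|y|y|y].
  - exact: (proj1 (left_identities u)).
  - exact: (proj2 (left_identities u)).
  - exact: (proj1 (right_identities y)).
  - exact: (proj1 (proj2 (right_identities y))).
  - exact: (proj2 (proj2 (right_identities y))).
Qed.

Lemma resolvent_at_zero : is_bounded_inverse A0 (Rf (RtoC 0)).
Proof.
  have Hdom0 : VW_domain eps theta (RtoC 0).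
  { left. split; first by rewrite Cmod_R Rabs_R0; lra. move=> /RtoC_inj. lra. }
  have [HR [Hr Hl]] := HRinv _ Hdom0.
  have sc0 : forall v : Y, scal (RtoC 0) v = zero by move=> v; exact: scal_zero_l.
  split; first done. split=> [y|u]; [move: (Hr y) | move: (Hl u)]; by rewrite sc0 plus_zero_r.
Qed.

End LaurentIdentities.

Lemma sum_n_shift {V : NormedModule C_AbsRing} (f : nat -> V) (N : nat) :
  sum_n f (S N) = plus (f O) (sum_n (fun s => f (S s)) N).
Proof. rewrite /sum_n sum_Sn_m; last lia. by rewrite sum_n_m_S. Qed.

Lemma convolution_shift {V : NormedModule C_AbsRing} (h : Z -> V) (t : nat) :
  sum_n (fun s => h (Z.of_nat (S t) - Z.of_nat s)%Z) (S t) =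
  plus (h (Z.of_nat (S t))) (sum_n (fun s => h (Z.of_nat t - Z.of_nat s)%Z) t).
Proof.
  have E : sum_n (fun s => h (Z.of_nat (S t) - Z.of_nat (S s))%Z) t
           = sum_n (fun s => h (Z.of_nat t - Z.of_nat s)%Z) t.
  { apply: sum_n_ext => s. f_equal. lia. }
  by rewrite sum_n_shift E.
Qed.

Section Vcoefficients.
Context {U W : NormedModule C_AbsRing}.
Variables (J : W -> W) (T0 : U -> W) (C1 : W -> U).
Hypotheses (HJ : is_linear J) (HT0 : is_linear T0) (HC1 : is_linear C1).
Hypothesis HJK : forall u, J (T0 (C1 u)) = T0 (C1 (J u)).

Lemma iter_commute (n : nat) (u : W) : Nat.iter n J (T0 (C1 u)) = T0 (C1 (Nat.iter n J u)).
Proof. elim: n => [|n IH] //=. by rewrite IH HJK. Qed.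

Lemma Vcoef_0 (v : U) : Vcoef J T0 C1 0 v = J (T0 v).
Proof. exact: (scal_one (K := C_AbsRing)). Qed.

Lemma Vcoef_S (s : nat) (v : U) : Vcoef J T0 C1 (S s) v = opp (J (T0 (C1 (Vcoef J T0 C1 s v)))).
Proof.
  rewrite /Vcoef (linear_scal C1 HC1) (linear_scal T0 HT0) (linear_scal J HJ).
  have -> : Nat.iter (S (S s)) J (Nat.iter (S s) (fun w => T0 (C1 w)) (T0 v))
            = J (T0 (C1 (Nat.iter (S s) J (Nat.iter s (fun w => T0 (C1 w)) (T0 v))))).
  { rewrite -iter_commute. reflexivity. }
  have -> : pow_n (K := C_AbsRing) (RtoC (-1)) (S s)
            = mult (opp one) (pow_n (K := C_AbsRing) (RtoC (-1)) s).
  { congr mult. apply: injective_projections => /=; ring. }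
  by rewrite -scal_assoc scal_opp_one.
Qed.
End Vcoefficients.

Section ResolventAlgebra.
Context {X Y : NormedModule C_AbsRing}.
Variables (A0 A1 : X -> Y) (Tm T0 T1 R0 : Y -> X).
Hypotheses (HA0 : is_linear A0) (HA1 : is_linear A1) (HTm : is_linear Tm) (HT0 : is_linear T0).
Hypotheses (HR0inv : is_bounded_inverse A0 R0) (Hid : simple_pole_identities A0 A1 Tm T0 T1).

Let C0 (u : X) : Y := plus (A0 u) (A1 u).

Let HR0 : is_linear R0 := proj1 HR0inv.
Let R0_right : forall y, A0 (R0 y) = y := proj1 (proj2 HR0inv).
Let R0_left : forall u, R0 (A0 u) = u := proj2 (proj2 HR0inv).
Let TmC0 : forall u, Tm (C0 u) = zero := proj1 Hid.
Let left_id : forall u, plus (Tm (A1 u)) (T0 (C0 u)) = u := proj1 (proj2 Hid).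
Let C0Tm : forall y, C0 (Tm y) = zero := proj1 (proj2 (proj2 Hid)).
Let right_id : forall y, plus (A1 (Tm y)) (C0 (T0 y)) = y := proj1 (proj2 (proj2 (proj2 Hid))).
Let right_id1 : forall y, plus (C0 (T1 y)) (A1 (T0 y)) = zero := proj2 (proj2 (proj2 (proj2 Hid))).
Let HC0 : is_linear C0 := is_linear_plus_fun A0 A1 HA0 HA1.

Lemma Tm_C1_Tm (y : Y) : Tm (A1 (Tm y)) = Tm y.
Proof. have := f_equal Tm (right_id y). by rewrite (linear_plus _ HTm) TmC0 plus_zero_r. Qed.

Lemma range_Tm_eq_range_P (u : X) : (exists y, u = Tm y) <-> (exists v, u = Tm (A1 v)).
Proof. split=> [[y ->] | [v ->]]; [by exists (Tm y); rewrite Tm_C1_Tm | by exists (A1 v)]. Qed.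

Lemma Tm_C1_T0 (y : Y) : Tm (A1 (T0 y)) = zero.
Proof.
  have := f_equal Tm (right_id1 y).
  by rewrite (linear_plus _ HTm) TmC0 plus_zero_l (linear_zero _ HTm).
Qed.

Lemma T0_C1_Tm (y : Y) : T0 (A1 (Tm y)) = zero.
Proof.
  have E := f_equal T0 (right_id y). rewrite (linear_plus _ HT0) in E.
  have E' := left_id (T0 y). rewrite Tm_C1_T0 plus_zero_l in E'.
  rewrite E' in E. exact: plus_left_zero E.
Qed.

(* The explicit inverse of I - T_0 C1:  J = T_{-1} C1 + A0^{-1} C0. *)
Definition J_op (u : X) : X := plus (Tm (A1 u)) (R0 (C0 u)).

Lemma J_linear : is_linear J_op.
Proof. exact: is_linear_plus_fun _ _ (is_linear_comp _ _ HA1 HTm) (is_linear_comp _ _ HC0 HR0). Qed.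

Lemma J_right_inverse (u : X) : minus (J_op u) (T0 (A1 (J_op u))) = u.
Proof.
  set v := R0 (C0 u).
  have Hv : C0 v = plus (C0 u) (A1 v) by rewrite /C0 /v R0_right.
  have hTm : Tm (A1 v) = zero.
  { have := TmC0 v. by rewrite Hv (linear_plus _ HTm) TmC0 plus_zero_l. }
  have hT0 : T0 (A1 v) = minus v (T0 (C0 u)).
  { have := left_id v. rewrite hTm plus_zero_l Hv (linear_plus _ HT0). exact: plus_solve_r. }
  rewrite /J_op -/v (linear_plus _ HA1) (linear_plus _ HT0) T0_C1_Tm plus_zero_l hT0.
  by rewrite minus_plus_minus left_id.
Qed.

Lemma J_left_inverse (u : X) : J_op (minus u (T0 (A1 u))) = u.
Proof.
  rewrite /J_op (linear_minus _ _ _ HA1) (linear_minus _ _ _ HTm) Tm_C1_T0 minus_zero_r.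
  rewrite (linear_minus _ _ _ HC0).
  have -> : C0 (T0 (A1 u)) = minus (A1 u) (A1 (Tm (A1 u))) by apply: plus_solve_r; apply: right_id.
  have -> : A1 (Tm (A1 u)) = opp (A0 (Tm (A1 u))).
  { apply: plus_eq_zero_opp. rewrite plus_comm. exact: C0Tm. }
  rewrite /C0 /minus opp_plus opp_opp -plus_assoc (plus_assoc (A1 u)) plus_opp_r plus_zero_l.
  rewrite (linear_plus _ HR0) R0_left (linear_opp _ _ HR0) R0_left.
  by rewrite plus_comm -plus_assoc plus_opp_l plus_zero_r.
Qed.

Lemma J_is_inverse : is_bounded_inverse (fun u => minus u (T0 (A1 u))) J_op.
Proof. split; [exact: J_linear | split; [exact: J_right_inverse | exact: J_left_inverse]]. Qed.

Lemma J_commutes (u : X) : J_op (T0 (A1 u)) = T0 (A1 (J_op u)).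
Proof.
  rewrite -{1}(J_right_inverse u) (linear_minus _ _ _ HA1) (linear_minus _ _ _ HT0).
  exact: J_left_inverse.
Qed.

Let Pc (u : X) : X := minus u (Tm (A1 u)).

Lemma Tm_A0 (u : X) : Tm (A0 u) = opp (Tm (A1 u)).
Proof. apply: plus_eq_zero_opp. rewrite -(linear_plus _ HTm). exact: TmC0. Qed.

Lemma T0_A0 (u : X) : T0 (A0 u) = minus (Pc u) (T0 (A1 u)).
Proof.
  have E := left_id u. rewrite /C0 (linear_plus _ HT0) plus_assoc in E.
  apply: plus_solve_l. apply: plus_solve_r. by rewrite plus_assoc.
Qed.

Lemma T0_C1_Pc (u : X) : T0 (A1 (Pc u)) = T0 (A1 u).
Proof. by rewrite /Pc (linear_minus _ _ _ HA1) (linear_minus _ _ _ HT0) T0_C1_Tm minus_zero_r. Qed.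

Section Recursion.
Variables (g : Z -> Y) (x : Z -> X) (c : X).
Hypotheses (Hc : exists y, c = Tm y) (Hinit : x (-1)%Z = c).
Hypothesis Hrec : forall t : nat,
  plus (A0 (x (Z.of_nat t))) (A1 (x (Z.of_nat t - 1)%Z)) = g (Z.of_nat t).

Let G (t : nat) : Y := sum_n (fun s => g (Z.of_nat t - Z.of_nat s)%Z) t.

Lemma solution_range_part (t : nat) : Tm (A1 (x (Z.of_nat t))) = minus (Tm (A1 c)) (Tm (G t)).
Proof.
  have step : forall t : nat, Tm (A1 (x (Z.of_nat t)))
      = minus (Tm (A1 (x (Z.of_nat t - 1)%Z))) (Tm (g (Z.of_nat t))).
  { move=> t0. have E := f_equal Tm (Hrec t0).
    rewrite (linear_plus _ HTm) Tm_A0 plus_comm in E. exact: minus_solve E. }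
  elim: t => [|t IH]; first by rewrite step Hinit /G sum_O.
  rewrite step (_ : (Z.of_nat (S t) - 1 = Z.of_nat t)%Z); last lia.
  by rewrite IH /G convolution_shift (linear_plus _ HTm) minus_minus.
Qed.

Lemma solution_complement_part (t : nat) :
  Pc (x (Z.of_nat t)) = sum_n (fun s => Vcoef J_op T0 A1 s (g (Z.of_nat t - Z.of_nat s)%Z)) t.
Proof.
  have step : forall t : nat, Pc (x (Z.of_nat t))
      = J_op (minus (T0 (g (Z.of_nat t))) (T0 (A1 (Pc (x (Z.of_nat t - 1)%Z))))).
  { move=> t0. have E := f_equal T0 (Hrec t0).
    rewrite (linear_plus _ HT0) T0_A0 -(T0_C1_Pc (x (Z.of_nat t0 - 1)%Z)) in E.
    by rewrite -(plus_solve_l _ _ _ E) -(T0_C1_Pc (x (Z.of_nat t0))) J_left_inverse. }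
  have HJK := J_commutes.
  elim: t => [|t IH].
  - have Pc0 : Pc c = zero.
    { case: Hc => y ->. by rewrite /Pc Tm_C1_Tm minus_eq_zero. }
    rewrite step Hinit Pc0 (linear_zero _ HA1) (linear_zero _ HT0) minus_zero_r sum_O.
    by rewrite Vcoef_0.
  - rewrite step (_ : (Z.of_nat (S t) - 1 = Z.of_nat t)%Z) ?IH; last lia.
    have HM : is_linear (fun v => opp (J_op (T0 (A1 v)))).
    { exact: is_linear_comp (is_linear_comp _ _ (is_linear_comp _ _ HA1 HT0) J_linear) is_linear_opp. }
    have E : sum_n (fun s => Vcoef J_op T0 A1 (S s) (g (Z.of_nat (S t) - Z.of_nat (S s))%Z)) t
             = opp (J_op (T0 (A1 (sum_n (fun s => Vcoef J_op T0 A1 s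
                                            (g (Z.of_nat t - Z.of_nat s)%Z)) t)))).
    { rewrite (linear_sum_n _ _ _ HM). apply: sum_n_ext => s.
      have -> : (Z.of_nat (S t) - Z.of_nat (S s) = Z.of_nat t - Z.of_nat s)%Z by lia.
      exact: (Vcoef_S _ _ _ J_linear HT0 HA1 HJK). }
    rewrite sum_n_shift E Vcoef_0 (linear_minus _ _ _ J_linear). by [].
Qed.

Lemma solution_formula (t : nat) :
  x (Z.of_nat t) = plus (Tm (minus (A1 c) (G t)))
    (sum_n (fun s => Vcoef J_op T0 A1 s (g (Z.of_nat t - Z.of_nat s)%Z)) t).
Proof.
  rewrite -solution_complement_part (linear_minus _ _ _ HTm) -solution_range_part.
  by rewrite plus_comm plus_minus_l.
Qed.

End Recursion.
End ResolventAlgebra.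

Theorem mainTheorem6
  (X Y : CompleteNormedModule C_AbsRing)
  (A0 A1 : X -> Y) (HA0 : is_linear A0) (HA1 : is_linear A1)
  (eps theta : R) (Heps : 0 < eps) (Htheta : 0 < theta)
  (Rf : C -> Y -> X)
  (HRinv : forall z : C, VW_domain eps theta z ->
             is_bounded_inverse (fun u : X => plus (A0 u) (scal z (A1 u))) (Rf z))
  (Han : analytic_on Rf (VW_domain eps theta))
  (T : Z -> Y -> X) (HT : laurent_expansion Rf T (RtoC 1) eps)
  (Hpole1 : exists y : Y, T (-1)%Z y <> zero)
  (Hpole2 : forall k : nat, (2 <= k)%nat -> forall y : Y, T (- Z.of_nat k)%Z y = zero)
  (Omega : Type) (n : Z -> Omega -> X)
  (F0 F1 : X -> Y) (HF0 : is_linear F0) (HF1 : is_linear F1)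
  (c : X) (Hc : exists y : Y, c = T (-1)%Z y)
  (x : Z -> Omega -> X)
  (Hxinit : forall w : Omega, x (-1)%Z w = c)
  (Hrec : forall (t : nat) (w : Omega),
      plus (A0 (x (Z.of_nat t) w)) (A1 (x (Z.of_nat t - 1)%Z w)) = gseq F0 F1 n (Z.of_nat t) w) :
  (forall u : X, (exists y : Y, u = T (-1)%Z y) <-> (exists v : X, u = T (-1)%Z (A1 v))) /\
  exists J : X -> X,
    is_bounded_inverse (fun u : X => minus u (T 0%Z (A1 u))) J /\
    (forall (t : nat) (w : Omega),
       x (Z.of_nat t) w =
       plus (T (-1)%Z (minus (A1 c)
                (sum_n (fun s : nat => gseq F0 F1 n (Z.of_nat t - Z.of_nat s)%Z w) t)))
            (sum_n (fun s : nat => Vcoef J (T 0%Z) A1 s (gseq F0 F1 n (Z.of_nat t - Z.of_nat s)%Z w)) t)) /\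
    (forall f : X -> C_NormedModule, is_linear f ->
       (forall y : Y, f (T (-1)%Z y) = zero) ->
       forall (t : nat) (w : Omega),
         f (x (Z.of_nat t) w) =
         sum_n (fun s : nat => f (Vcoef J (T 0%Z) A1 s (gseq F0 F1 n (Z.of_nat t - Z.of_nat s)%Z w))) t).
Proof.
  have HTl := proj1 HT.
  have HR0 := resolvent_at_zero A0 A1 eps theta Rf Heps HRinv.
  have Hid := laurent_pole_identities A0 A1 eps theta Rf T HA0 HA1 Heps Htheta HRinv HT Hpole2.
  split; first exact: range_Tm_eq_range_P (HTl _) Hid.
  exists (J_op A0 A1 (T (-1)%Z) (Rf (RtoC 0))).
  split; first exact: J_is_inverse (HTl _) (HTl _) HR0 Hid.
  have Hx := fun w => solution_formula A0 A1 _ _ _ _ HA0 HA1 (HTl _) (HTl _) HR0 Hid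
                        (fun t => gseq F0 F1 n t w) (fun t => x t w) c Hc (Hxinit w) (fun t => Hrec t w).
  split=> [t w | f Hf Hf0 t w]; first exact: Hx.
  by rewrite Hx (linear_plus f Hf) Hf0 plus_zero_l (linear_sum_n f _ _ Hf).
Qed.
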